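(* Let $\Gamma$ be a finite set of assumptions of the form $\{b_1q_1\overline{b_1'}=0,\dots,b_mq_m\overline{b_m'}=0\}\cup\{c_1\le c_1',\dots,c_n\le c_n'\}$ with $q_i\in\Sigma$ and all $b_i,b_i',c_j,c_j'$ Boolean expressions. Then for every KAT expression $e$, every atom $\alpha\in\mathsf{At}$ and every $p\in\Sigma$, $$\mathsf{D}_{\alpha p}(\mathsf{GS}^\Gamma(e))=\mathsf{GS}^\Gamma(\Delta^\Gamma_{\alpha p}(e)).$$
   Context: Let $\Sigma$ be a finite nonempty set of action symbols and $T=\{t_1,\dots,t_l\}$ a finite nonempty set of test symbols. Boolean expressions: $b::=0\mid 1\mid t\mid \overline{b}\mid b_1+b_2\mid b_1 b_2$; KAT expressions (syntactic terms): $e::=p\in\Sigma\mid b\mid e_1+e_2\mid e_1e_2\mid e^*$. $\mathsf{At}$ is the set of atoms (words $b_1\cdots b_l$ with $b_i\in\{t_i,\overline{t_i}\}$), identified with truth assignments to $T$; $\alpha\le b$ means $b$ is true under $\alpha$. Guarded strings: $\mathsf{GS}=(\mathsf{At}\cdot\Sigma)^*\cdot\mathsf{At}$; for $R\subseteq\mathsf{GS}$, $\mathsf{D}_{\alpha p}(R)=\{y\in\mathsf{GS}\mid\alpha py\in R\}$. The fusion product $xy$ is defined only when the last atom of $x$ equals the first atom of $y$, and is the concatenation with one copy of that atom omitted; $X\diamond Y=\{xy\mid x\in X,y\in Y,xy\text{ defined}\}$, $X^{n+1}=X\diamond X^n$. $\mathsf{At}^\Gamma=\{\alpha\in\mathsf{At}\mid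 \alpha\le c\Rightarrow\alpha\le c'\text{ for all }(c\le c')\in\Gamma\}$. Guarded strings modulo $\Gamma$: $\mathsf{GS}^\Gamma(p)=\{\alpha p\beta\mid\alpha,\beta\in\mathsf{At}^\Gamma\text{ and for every assumption }bp\overline{b'}=0\text{ in }\Gamma\text{ (with this same }p),\ \alpha\le b\Rightarrow\beta\le b'\}$; $\mathsf{GS}^\Gamma(b)=\{\alpha\in\mathsf{At}^\Gamma\mid\alpha\le b\}$; $\mathsf{GS}^\Gamma(e_1+e_2)=\mathsf{GS}^\Gamma(e_1)\cup\mathsf{GS}^\Gamma(e_2)$; $\mathsf{GS}^\Gamma(e_1e_2)=\mathsf{GS}^\Gamma(e_1)\diamond\mathsf{GS}^\Gamma(e_2)$; $\mathsf{GS}^\Gamma(e^* )=\bigcup_{n\ge0}\mathsf{GS}^\Gamma(e)^n$ with $X^0=\mathsf{At}^\Gamma$; for a set $E$, $\mathsf{GS}^\Gamma(E)=\bigcup_{e\in E}\mathsf{GS}^\Gamma(e)$. $\mathsf{E}_\alpha(p)=0$; $\mathsf{E}_\alpha(b)=1$ iff $\alpha\le b$; $\mathsf{E}_\alpha(e_1+e_2)=\max(\mathsf{E}_\alpha(e_1),\mathsf{E}_\alpha(e_2))$; $\mathsf{E}_\alpha(e_1e_2)=\mathsf{E}_\alpha(e_1)\mathsf{E}_\alpha(e_2)$; $\mathsf{E}_\alpha(e^* )=1$. For a set $S$ of expressions: $S\cdot e=\{e'e\mid e'\in S\}$ if $e$ is neither the constant $0$ nor $1$, $S\cdot0=\emptyset$,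 $S\cdot1=S$. Partial derivatives modulo $\Gamma$: if $\alpha\notin\mathsf{At}^\Gamma$ then $\Delta^\Gamma_{\alpha p}(e)=\emptyset$ for all $e$. If $\alpha\in\mathsf{At}^\Gamma$: $\Delta^\Gamma_{\alpha p}(p')=\{\prod\{b'\mid (bp\overline{b'}=0)\in\Gamma,\ \alpha\le b\}\}$ (a singleton containing the conjunction of those $b'$, which is the constant $1$ if there are none) if $p'=p$, and $\emptyset$ if $p'\ne p$; $\Delta^\Gamma_{\alpha p}(b)=\emptyset$; $\Delta^\Gamma_{\alpha p}(e_1+e_2)=\Delta^\Gamma_{\alpha p}(e_1)\cup\Delta^\Gamma_{\alpha p}(e_2)$; $\Delta^\Gamma_{\alpha p}(e_1e_2)=\Delta^\Gamma_{\alpha p}(e_1)\cdot e_2$ if $\mathsf{E}_\alpha(e_1)=0$, and $\Delta^\Gamma_{\alpha p}(e_1)\cdot e_2\cup\Delta^\Gamma_{\alpha p}(e_2)$ if $\mathsf{E}_\alpha(e_1)=1$; $\Delta^\Gamma_{\alpha p}(e^* )=\Delta^\Gamma_{\alpha p}(e)\cdot e^*$. *)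

From Stdlib Require List.
From mathcomp Require Import all_boot.
Set Implicit Arguments.
Unset Strict Implicit.
Unset Printing Implicit Defensive.

Section KAT.
Variables (Sigma Tst : finType).

Inductive bexp : Type :=
| BZero | BOne | BTest of Tst | BNeg of bexp
| BPlus of bexp & bexp | BAnd of bexp & bexp.

Inductive kexp : Type :=
| KAct of Sigma | KTest of bexp
| KPlus of kexp & kexp | KSeq of kexp & kexp | KStar of kexp.

Definition atom := {ffun Tst -> bool}.

(* alpha <= b : b is true under alpha *)
Fixpoint beval (a : atom) (b : bexp) : bool :=
  match b with
  | BZero => false | BOne => true | BTest t => a t
  | BNeg b => ~~ beval a b
  | BPlus b1 b2 => beval a b1 || beval a b2
  | BAnd b1 b2 => beval a b1 && beval a b2
  end.

(* Guarded string alpha0 p1 alpha1 ... pn alphan, represented as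
   (alpha0, [:: (p1, alpha1); ...; (pn, alphan)]). *)
Definition gstring := (atom * seq (Sigma * atom))%type.
Definition gset := gstring -> Prop.

Definition last_atom (x : gstring) : atom := last x.1 (map snd x.2).

Definition Dgs (a : atom) (p : Sigma) (R : gset) : gset :=
  fun y => R (a, (p, y.1) :: y.2).

Definition fus (X Y : gset) : gset :=
  fun z => exists x y, X x /\ Y y /\ last_atom x = y.1 /\ z = (x.1, x.2 ++ y.2).

Record hyps := Hyps {
  heqs : seq (bexp * Sigma * bexp);   (* (b, q, b') stands for b q ~b' = 0 *)
  hles : seq (bexp * bexp)            (* (c, c') stands for c <= c' *)
}.

Variable G : hyps.

Definition atG (a : atom) : bool :=
  all (fun cc => beval a cc.1 ==> beval a cc.2) (hles G).

Definition atGs : gset := fun x => atG x.1 /\ x.2 = [::].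

Fixpoint gpow (X : gset) (n : nat) : gset :=
  match n with 0 => atGs | n.+1 => fus X (gpow X n) end.

Fixpoint GSG (e : kexp) : gset :=
  match e with
  | KAct p => fun x =>
      exists a b, x = (a, [:: (p, b)]) /\ atG a /\ atG b /\
        (forall bb, List.In bb (heqs G) -> bb.1.2 = p -> beval a bb.1.1 -> beval b bb.2)
  | KTest b => fun x => atG x.1 /\ beval x.1 b /\ x.2 = [::]
  | KPlus e1 e2 => fun x => GSG e1 x \/ GSG e2 x
  | KSeq e1 e2 => fus (GSG e1) (GSG e2)
  | KStar e => fun x => exists n, gpow (GSG e) n x
  end.

Definition GSGset (E : seq kexp) : gset := fun x => exists2 e, List.In e E & GSG e x.

Fixpoint Eps (a : atom) (e : kexp) : bool :=
  match e with
  | KAct _ => false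
  | KTest b => beval a b
  | KPlus e1 e2 => Eps a e1 || Eps a e2
  | KSeq e1 e2 => Eps a e1 && Eps a e2
  | KStar _ => true
  end.

Definition dotk (S : seq kexp) (e : kexp) : seq kexp :=
  match e with
  | KTest BZero => [::]
  | KTest BOne => S
  | _ => map (fun e' => KSeq e' e) S
  end.

Fixpoint bprod (l : seq bexp) : bexp :=
  match l with
  | [::] => BOne
  | [:: b] => b
  | b :: l' => BAnd b (bprod l')
  end.

Fixpoint DeltaG' (a : atom) (p : Sigma) (e : kexp) : seq kexp :=
  match e with
  | KAct p' =>
      if p' == p then
        [:: KTest (bprod [seq bb.2 | bb <- heqs G & (bb.1.2 == p) && beval a bb.1.1])]
      else [::]
  | KTest _ => [::]
  | KPlus e1 e2 => DeltaG' a p e1 ++ DeltaG' a p e2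
  | KSeq e1 e2 =>
      if Eps a e1 then dotk (DeltaG' a p e1) e2 ++ DeltaG' a p e2
      else dotk (DeltaG' a p e1) e2
  | KStar e1 => dotk (DeltaG' a p e1) (KStar e1)
  end.

Definition DeltaG (a : atom) (p : Sigma) (e : kexp) : seq kexp :=
  if atG a then DeltaG' a p e else [::].

End KAT.

(* The proof rests on a few general facts about
   guarded-string languages:
   - every string of GS^Gamma(e) starts and ends with an atom of At^Gamma;
   - the one-atom string alpha lies in GS^Gamma(e) iff alpha is in At^Gamma
     and E_alpha(e) = 1 (nullability);
   - the derivative of a fusion product obeys the Brzozowski rule
       D_{alpha p}(X <> Y) = (alpha in X ? D_{alpha p}(Y) : 0) + D_{alpha p}(X) <> Y,
     and hence D_{alpha p}(X^* ) = D_{alpha p}(X) <> X^*;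
   - GS^Gamma commutes with the set operations used by Delta (union, and the
     product S . e, including its simplifications for the constants 0 and 1);
   - the conjunction computed for an action symbol holds exactly when the
     target atom satisfies every assumption b p ~b' = 0 triggered by alpha.
   For alpha outside At^Gamma both sides are empty. *)
From Stdlib Require Import Setoid.
From mathcomp Require Import all_boot.

Set Implicit Arguments.
Unset Strict Implicit.
Unset Printing Implicit Defensive.

Section PartialDerivatives.
Variables (Sigma Tst : finType) (G : hyps Sigma Tst).
Implicit Types (e : kexp Sigma Tst) (a : atom Tst) (p q : Sigma).
Implicit Types (x y z : gstring Sigma Tst) (X Y : gset Sigma Tst).

Definition gstar X : gset Sigma Tst := fun x => exists n, gpow G X n x.

Lemma last_atom_fus x z :
  last_atom x = z.1 -> last_atom (x.1, x.2 ++ z.2) = last_atom z.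
Proof. by rewrite /last_atom /= map_cat last_cat => ->. Qed.

Lemma GSG_first_atG e x : GSG G e x -> atG G x.1.
Proof.
elim: e x => [q|b|e1 IH1 e2 IH2|e1 IH1 e2 IH2|e1 IH1] x /=.
- by move=> [a' [b [-> [Ha _]]]].
- by case.
- by case; [apply: IH1|apply: IH2].
- by move=> [x1 [z [H1 [_ [_ ->]]]]]; exact: IH1 H1.
- move=> [[|n]] /=; first by case.
  by move=> [x1 [z [H1 [_ [_ ->]]]]]; exact: IH1 H1.
Qed.

Lemma gpow_last_atG X n x :
  (forall x, X x -> atG G (last_atom x)) -> gpow G X n x -> atG G (last_atom x).
Proof.
move=> HX; elim: n x => [|n IH] [x1 x2] /=; first by case=> H /= ->.
by move=> [x' [z [_ [Hz [Hl ->]]]]]; rewrite last_atom_fus //; exact: IH.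
Qed.

Lemma GSG_last_atG e x : GSG G e x -> atG G (last_atom x).
Proof.
elim: e x => [q|b|e1 IH1 e2 IH2|e1 IH1 e2 IH2|e1 IH1] [x1 x2] /=.
- by move=> [a' [b [[_ ->] [_ [Hb _]]]]].
- by case=> H [_ ->].
- by case; [apply: IH1|apply: IH2].
- by move=> [x [z [_ [Hz [Hl ->]]]]]; rewrite last_atom_fus //; exact: IH2.
- by move=> [n]; exact: gpow_last_atG IH1.
Qed.

Lemma GSG_nil e a : GSG G e (a, [::]) <-> atG G a /\ Eps a e.
Proof.
elim: e a => [q|b|e1 IH1 e2 IH2|e1 IH1 e2 IH2|e1 IH1] a /=.
- by split=> [[a' [b [[]]]]|[]].
- by split=> [[Ha [Hb _]]|[Ha Hb]].
- rewrite IH1 IH2; split=> [[[Ha H]|[Ha H]]|[Ha /orP [H|H]]].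
  + by rewrite H.
  + by rewrite H orbT.
  + by left.
  + by right.
- split=> [|[Ha /andP [H1 H2]]]; last first.
    by exists (a, [::]), (a, [::]); rewrite IH1 IH2.
  move=> [[x1 [|? ?]] [[z1 [|? ?]] [H1 [H2 [/= Hl [Ex]]]]]] //.
  rewrite /last_atom /= in Hl; subst x1 z1.
  by move: H1 H2 => /IH1 [Ha H1] /IH2 [_ H2]; rewrite H1 H2.
- by split=> [H|[Ha _]]; [split; first exact: (@GSG_first_atG (KStar e1) (a, [::]) H) | exists 0].
Qed.

Lemma Dgs_fus X Y a p y :
  Dgs a p (fus X Y) y <-> (X (a, [::]) /\ Dgs a p Y y) \/ fus (Dgs a p X) Y y.
Proof.
case: y => y1 y2; rewrite /Dgs /=; split.
- move=> [[x1 [|[q c] x2]] [[z1 z2] [Hx [Hz [Hl E]]]]]; case: E.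
  + by move=> -> ->; rewrite /last_atom /= in Hl; subst z1; left.
  + by move=> -> -> -> ->; right; exists (c, x2), (z1, z2).
- case=> [[Hx Hy]|[[x1 x2] [z [Hx [Hz [Hl [-> ->]]]]]]].
  + by exists (a, [::]), (a, (p, y1) :: y2).
  + by exists (a, (p, x1) :: x2), z.
Qed.

Lemma fus_ext X X' Y z :
  (forall x, X x <-> X' x) -> fus X Y z <-> fus X' Y z.
Proof. by move=> H; split=> [[x [w [/H Hx Hw]]]|[x [w [/H Hx Hw]]]]; exists x, w. Qed.

Lemma Dgs_gstar X a p y : Dgs a p (gstar X) y <-> fus (Dgs a p X) (gstar X) y.
Proof.
split=> [[n]|[x [z [Hx [[n Hz] Hr]]]]]; last first.
  by exists n.+1; apply/Dgs_fus; right; exists x, z.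
elim: n => [|n IH] /=; first by case.
move/Dgs_fus=> [[_ H]|[x [z [Hx [Hz Hr]]]]]; first exact: IH.
by exists x, z; split=> //; split=> //; exists n.
Qed.

Lemma GSGset_cat (S1 S2 : seq (kexp Sigma Tst)) y :
  GSGset G (S1 ++ S2) y <-> GSGset G S1 y \/ GSGset G S2 y.
Proof.
split=> [[e' /List.in_app_iff [H|H] He']|[[e' H He']|[e' H He']]];
  by [left; exists e'|right; exists e'|exists e' => //; apply/List.in_app_iff; auto].
Qed.

Lemma GSGset_mapseq (S : seq (kexp Sigma Tst)) e y :
  GSGset G (map (fun e' => KSeq e' e) S) y <-> fus (GSGset G S) (GSG G e) y.
Proof.
split=> [[_ /List.in_map_iff [e' [<- He']] [x [z [Hx Hz]]]]|[x [z [[e' He' Hx] Hz]]]].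
- by exists x, z; split=> //; exists e'.
- by exists (KSeq e' e); [exact: (List.in_map (fun e' => KSeq e' e))|exists x, z].
Qed.

(* The same holds for S . e, whose simplifications for e = 0 and e = 1 are
   sound because GS^Gamma(0) is empty and GS^Gamma(1) = At^Gamma is a unit. *)
Lemma GSGset_dotk (S : seq (kexp Sigma Tst)) e y :
  GSGset G (dotk S e) y <-> fus (GSGset G S) (GSG G e) y.
Proof.
case: e => [q|[||t|b|b1 b2|b1 b2]|e1 e2|e1 e2|e1]; try exact: GSGset_mapseq.
- by split=> [[]|[x [z [_ [[_ []]]]]]].
- split=> [Hy|[[x1 x2] [z [Hx [[_ [_ Hz2]] [Hl ->]]]]]]; last by rewrite /= Hz2 cats0.
  exists y, (last_atom y, [::]); split=> //; split.
    by split=> //; case: Hy => e' _ /GSG_last_atG.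
  by case: y {Hy} => y1 y2; rewrite /= cats0.
Qed.

Lemma beval_bprod c (l : seq (bexp Tst)) : beval c (bprod l) = all (beval c) l.
Proof.
elim: l => [|b l IH] //.
case: l IH => [|b' l] IH; first by rewrite /= andbT.
by rewrite [bprod _]/= [beval _ _]/= IH.
Qed.

(* The atom c satisfies the conjunction of the b' over the assumptions
   b q ~b' = 0 with q = p and alpha <= b exactly when c satisfies every
   such triggered assumption: this is the side condition of GS^Gamma(p). *)
Lemma all_triggered c a p (l : seq (bexp Tst * Sigma * bexp Tst)) :
  all (beval c) [seq bb.2 | bb <- l & (bb.1.2 == p) && beval a bb.1.1] <->
  (forall bb, List.In bb l -> bb.1.2 = p -> beval a bb.1.1 -> beval c bb.2).
Proof.
elim: l => [|bb l IH] /=; first by split.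
case: ifP => [/andP [/eqP Hp Ha]|Hn] /=; split.
- by move=> /andP [Hc /IH H] bb' [<-|/H].
- move=> H; apply/andP; split; first exact: H (or_introl _) Hp Ha.
  by apply/IH => bb' Hin; apply: H; right.
- move=> /IH H bb' [<- Hp Ha|/H] //.
  by move: Hn; rewrite Hp eqxx Ha.
- by move=> H; apply/IH => bb' Hin; apply: H; right.
Qed.

Lemma Dgs_act q a p y : atG G a ->
  Dgs a p (GSG G (KAct Tst q)) y <-> GSGset G (DeltaG' G a p (KAct Tst q)) y.
Proof.
move=> Ha; case: y => y1 y2; rewrite /Dgs /=.
case: eqP => [->|Hne]; split.
- move=> [_ [_ [[<- <- ->] [_ [Hb H]]]]].
  eexists; first by left.
  by split=> //; split=> //; rewrite beval_bprod; apply/all_triggered.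
- move=> [_ [<-|[]] [Hy1 [Hb /= ->]]].
  exists a, y1; split=> //; split=> //; split=> //.
  by apply/all_triggered; rewrite -beval_bprod.
- by move=> [_ [_ [[_ Epq _ _] _]]]; case: (Hne (esym Epq)).
- by case.
Qed.

Lemma Dgs_DeltaG' e a p : atG G a ->
  forall y, Dgs a p (GSG G e) y <-> GSGset G (DeltaG' G a p e) y.
Proof.
move=> Ha; elim: e => [q|b|e1 IH1 e2 IH2|e1 IH1 e2 IH2|e1 IH1] y.
- exact: Dgs_act.
- by split=> [[_ []]|[]].
- by rewrite GSGset_cat -IH1 -IH2.
- rewrite [GSG G _]/= Dgs_fus GSG_nil /=.
  case: (Eps a e1).
  + rewrite GSGset_cat GSGset_dotk -(fus_ext _ _ IH1) -IH2.
    by split=> [[[_ H]|H]|[H|H]]; by [left|right].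
  + rewrite GSGset_dotk -(fus_ext _ _ IH1).
    by split=> [[[[_ //] _]|//]|H]; right.
- by rewrite [GSG G _]/= -/(gstar _) Dgs_gstar GSGset_mapseq -(fus_ext _ _ IH1).
Qed.

End PartialDerivatives.

Theorem proposition7 (Sigma Tst : finType) (HS : 0 < #|Sigma|) (HT : 0 < #|Tst|)
  (G : hyps Sigma Tst) (e : kexp Sigma Tst) (a : atom Tst) (p : Sigma) :
  forall y : gstring Sigma Tst,
    Dgs a p (GSG G e) y <-> GSGset G (DeltaG G a p e) y.
Proof.
move=> y; rewrite /DeltaG; case Ha: (atG G a); first exact: Dgs_DeltaG'.
(* alpha is not in At^Gamma: no string of GS^Gamma(e) starts with alpha *)
split=> [/GSG_first_atG|[]] //=.
by rewrite Ha.
Qed.
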